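(* Let $X,Y$ be real Banach spaces with a bilinear map $\langle\cdot,\cdot\rangle\colon X\times Y\to\mathbb{R}$ and normalized sequences $(e_j)\subset X$, $(f_j)\subset Y$ satisfying (B1)–(B5) below. Let $T\colon X\to X$ be a bounded linear operator with $\delta:=\inf_j\langle Te_j,f_j\rangle>0$. Let $L\in2\mathbb{N}$, $N\in\mathbb{N}$ with $N\ge L$, and let $\mathcal{A}\subset\mathbb{N}$ with $|\mathcal{A}|=N$. Then $$\frac{1}{|\Omega_L^{\mathcal{A}}|}\sum_{(\mathcal{B},(\varepsilon_k))\in\Omega_L^{\mathcal{A}}}\bigl\langle Tb_{\mathcal{B}}^{(\varepsilon_k)},d_{\mathcal{B}}^{(\varepsilon_k)}\bigr\rangle\ \ge\ \Bigl[\delta-C_d\frac{\|T\|}{N-1}\nu(N)\Bigr]\cdot L.$$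
   Context: Standing assumptions: (B1) if $\langle x,y\rangle=0$ for all $y\in Y$ then $x=0$; (B2) if $\langle x,y\rangle=0$ for all $x\in X$ then $y=0$; (B3) there is $C_d>0$ with $|\langle x,y\rangle|\le C_d\|x\|\|y\|$; (B4) $\langle e_j,f_k\rangle=1$ if $j=k$ and $0$ otherwise; (B5) every $x\in X$ has the unique representation $x=\sum_j\langle x,f_j\rangle e_j$ converging in $\sigma(X,Y)$, the topology generated by the seminorms $x\mapsto|\langle x,y\rangle|$, $y\in Y$. For finite $\mathcal{B}$, $\mathcal{E}(\mathcal{B})=\{(\varepsilon_k)\in\{\pm1\}^{\mathcal{B}}:\sum_{k\in\mathcal{B}}\varepsilon_k=0\}$. For $\mathcal{A}$ finite with $|\mathcal{A}|\ge L$, $\Omega_L^{\mathcal{A}}=\{(\mathcal{B},(\varepsilon_k)):\mathcal{B}\subset\mathcal{A},\ |\mathcal{B}|=L,\ (\varepsilon_k)\in\mathcal{E}(\mathcal{B})\}$, and $b_{\mathcal{B}}^{(\varepsilon_k)}=\sum_{k\in\mathcal{B}}\varepsilon_ke_k$, $d_{\mathcal{B}}^{(\varepsilon_k)}=\sum_{k\in\mathcal{B}}\varepsilon_kf_k$. The function $\nu\colon\mathbb{N}\to[0,\infty]$ is $$\nu(n)=\sup\Bigl\{\min\Bigl(\max_{l\in\mathcal{A}}\Bigl\|\sum_{k\in\mathcal{A}\setminus\{l\}}e_k\Bigr\|_X,\ \max_{k\in\mathcal{A}}\Bigl\|\sum_{l\in\mathcal{A}\setminus\{k\}}f_l\Bigr\|_Y\Bigr):\mathcal{A}\subset\mathbb{N},\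 |\mathcal{A}|=n\Bigr\}.$$ *)

From HB Require Import structures.
From mathcomp Require Import all_boot all_order all_algebra.
From mathcomp Require Import finmap.
From mathcomp Require Import all_classical all_reals all_analysis.
Set Implicit Arguments. Unset Strict Implicit. Unset Printing Implicit Defensive.
Import Order.TTheory GRing.Theory Num.Theory.
Import numFieldNormedType.Exports.
Local Open Scope classical_set_scope.
Local Open Scope ring_scope.
Local Open Scope fset_scope.

Section Defs.
Variable R : realType.

Definition opnorm (X : normedModType R) (T : X -> X) : R :=
  sup [set `|T x| | x in [set x : X | `|x| <= 1]].

Definition delta_of (X Y : normedModType R) (pair : X -> Y -> R) (T : X -> X)
  (e : nat -> X) (f : nat -> Y) : R :=
  inf [set pair (T (e j)) (f j) | j in [set: nat]].

Definition maxdel (V : normedModType R) (v : nat -> V) (A : {fset nat}) : R :=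
  \big[Num.max/0]_(l <- A) `|\sum_(k <- A | k != l) v k|.

Definition nu (X Y : normedModType R) (e : nat -> X) (f : nat -> Y) (n : nat)
  : \bar R :=
  ereal_sup [set (Num.min (maxdel e A) (maxdel f A))%:E
            | A in [set A : {fset nat} | #|` A| = n]].

Definition sgn (o : option bool) : int :=
  match o with Some true => 1 | Some false => -1 | None => 0 end.

(* Omega_L^A: a pair (B, eps) with B a subset of A of size L and
   eps in E(B). eps : B -> {+1,-1} is encoded as a finite function on A
   with values in option bool that is None exactly outside B
   (a bijective encoding of {+1,-1}^B). *)
Definition Omega (A : {fset nat}) (L : nat) :
    {set ({set A} * {ffun A -> option bool})%type} :=
  [set p : ({set A} * {ffun A -> option bool})%type |
     [&& #|p.1| == L,
         [forall k : A, (k \in p.1) == (p.2 k != None)]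
       & \sum_(k in p.1) sgn (p.2 k) == 0]].

Definition bvec (V : normedModType R) (A : {fset nat}) (v : nat -> V)
  (p : ({set A} * {ffun A -> option bool})%type) : V :=
  \sum_(k in p.1) (sgn (p.2 k))%:~R *: v (fsval k).

End Defs.

(* Expanding the pairing, a signing (B, eps) contributes
   sum_k eps_k^2 <T e_k, f_k> >= L delta on the diagonal and
   sum_{k <> l} eps_k eps_l <T e_k, f_l> off it.  Relabelling A by a permutation
   acts bijectively on Omega, so the correlation sum_(B, eps) eps_k eps_l takes a
   single value c for all k <> l; as sum_{k <> l} eps_k eps_l = (sum eps)^2 - sum eps^2
   = -L for every signing, c N (N - 1) = -|Omega| L.  The off-diagonal part thus
   averages to -L / (N (N - 1)) times sum_{k <> l} <T e_k, f_l>, and summing first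
   over l (resp. k) bounds that sum by N C_d ||T|| max_k ||sum_{l <> k} f_l||
   (resp. the same with e). *)

From HB Require Import structures.
From mathcomp Require Import all_boot all_order all_algebra.
From mathcomp Require Import finmap.
From mathcomp Require Import all_classical all_reals all_analysis.
From mathcomp Require Import all_fingroup.
From mathcomp Require Import ring.
Set Implicit Arguments. Unset Strict Implicit. Unset Printing Implicit Defensive.
Import Order.TTheory GRing.Theory Num.Theory.
Import numFieldNormedType.Exports.
Local Open Scope classical_set_scope.
Local Open Scope ring_scope.

Section Signs.
Variables (R : realType) (A : {fset nat}) (L : nat).

Local Notation signing := ({set A} * {ffun A -> option bool})%type.
Local Notation Om := (Omega A L).

Definition eps (p : signing) (k : A) : R := (sgn (p.2 k))%:~R.

Lemma OmegaP (p : signing) : reflect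
  [/\ #|p.1| = L, forall k, (k \in p.1) = (p.2 k != None) &
      \sum_(k in p.1) sgn (p.2 k) = 0] (p \in Om).
Proof.
rewrite inE; apply: (iffP and3P) => [[/eqP h1 /forallP h2 /eqP h3]|[h1 h2 h3]].
  by split=> // k; apply/eqP.
by split; [apply/eqP | apply/forallP => k; apply/eqP | apply/eqP].
Qed.

Lemma eps_out (p : signing) k : p \in Om -> k \notin p.1 -> eps p k = 0.
Proof. by case/OmegaP=> _ -> _; rewrite negbK /eps => /eqP ->. Qed.

Lemma sum_eps_support (p : signing) (F : A -> R) : p \in Om ->
  \sum_(k in p.1) eps p k * F k = \sum_k eps p k * F k.
Proof.
move=> pO; rewrite [RHS](bigID (mem p.1)) /= [X in _ + X]big1 ?addr0 // => k kNp.
by rewrite eps_out ?mul0r.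
Qed.

Lemma sum_eps (p : signing) : p \in Om -> \sum_k eps p k = 0.
Proof.
move=> pO; under eq_bigr do rewrite -[eps p _]mulr1.
rewrite -sum_eps_support //; under eq_bigr do rewrite mulr1.
by case/OmegaP: pO => _ _ h; rewrite /eps -rmorph_sum h.
Qed.

Lemma sum_eps_sqr (p : signing) : p \in Om -> \sum_k eps p k ^+ 2 = L%:R.
Proof.
move=> pO; under eq_bigr do rewrite expr2.
rewrite -sum_eps_support //; case/OmegaP: pO => <- inp _.
rewrite -sumr_const; apply: eq_bigr => k; rewrite inp /eps.
by case: (p.2 k) => // -[] _; rewrite /= ?mulrNN mulr1.
Qed.

Lemma sum_eps_offdiag (p : signing) : p \in Om ->
  \sum_k \sum_(l | l != k) eps p k * eps p l = - L%:R.
Proof.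
move=> pO; transitivity (\sum_k (eps p k * \sum_l eps p l - eps p k ^+ 2)).
  apply: eq_bigr => k _.
  by rewrite [in RHS](bigD1 k) //= mulrDr expr2 addrC addKr mulr_sumr.
by rewrite sumrB -mulr_suml sum_eps // mul0r sum_eps_sqr // sub0r.
Qed.

Definition sign_corr (k l : A) : R := \sum_(p in Om) eps p k * eps p l.

Definition permute_signing (s : {perm A}) (p : signing) : signing :=
  ((s^-1)%g @^-1: p.1, [ffun k => p.2 ((s^-1)%g k)]).

Lemma permute_signingK (s : {perm A}) :
  cancel (permute_signing s) (permute_signing (s^-1)%g).
Proof.
move=> [B g]; congr pair; first by apply/setP => k; rewrite !inE invgK permK.
by apply/ffunP => k; rewrite !ffunE invgK permK.
Qed.

Lemma permute_signing_Omega (s : {perm A}) (p : signing) :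
  p \in Om -> permute_signing s p \in Om.
Proof.
case/OmegaP=> h1 h2 h3; apply/OmegaP; split=> /=.
- by rewrite card_preimset ?h1 //; exact: perm_inj.
- by move=> k; rewrite !inE ffunE h2.
- rewrite (reindex_inj (@perm_inj _ s)) -[RHS]h3 /=.
  by apply: eq_big => k; rewrite ?inE ?ffunE permK.
Qed.

Lemma permute_signing_OmegaE (s : {perm A}) (p : signing) :
  (permute_signing s p \in Om) = (p \in Om).
Proof.
apply/idP/idP; last exact: permute_signing_Omega.
by move=> /(permute_signing_Omega (s^-1)%g); rewrite permute_signingK.
Qed.

Lemma sign_corr_perm (s : {perm A}) k l : sign_corr (s k) (s l) = sign_corr k l.
Proof.
rewrite /sign_corr (reindex_inj (can_inj (permute_signingK s))) /=.
apply: eq_big => p; first by rewrite permute_signing_OmegaE.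
by rewrite /eps !ffunE !permK.
Qed.

Lemma sign_corr_offdiag_eq k l k' l' : k != l -> k' != l' ->
  sign_corr k l = sign_corr k' l'.
Proof.
move=> neq_kl neq_kl'.
pose l1 := tperm k k' l.
have neq_kl1 : k' != l1.
  by rewrite /l1 -{1}(tpermL k k') (inj_eq (can_inj (tpermK k k'))).
pose s := (tperm k k' * tperm l1 l')%g.
have -> : k' = s k by rewrite permM tpermL tpermD // eq_sym.
have -> : l' = s l by rewrite permM tpermL.
by rewrite sign_corr_perm.
Qed.

Lemma sum_sign_corr_offdiag :
  \sum_k \sum_(l | l != k) sign_corr k l = - (#|Om| * L)%:R.
Proof.
under eq_bigr do rewrite exchange_big /=.
rewrite exchange_big (eq_bigr (fun=> - L%:R)) => [|p pO]; last exact: sum_eps_offdiag.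
by rewrite sumr_const mulNrn -mulrnA mulnC.
Qed.

Lemma sign_corr_offdiag k l : k != l ->
  sign_corr k l = - ((#|Om| * L)%:R / (#|` A| * #|` A|.-1)%:R).
Proof.
move=> neq_kl.
have const_corr k' : \sum_(l' | l' != k') sign_corr k' l' = sign_corr k l *+ #|` A|.-1.
  rewrite cardfE -(cardC1 k') -sumr_const; apply: eq_big => [l'|l'] //.
  by move=> neq_lk'; apply: sign_corr_offdiag_eq; rewrite // eq_sym.
have corr_mul : sign_corr k l * (#|` A| * #|` A|.-1)%:R = - (#|Om| * L)%:R.
  rewrite -sum_sign_corr_offdiag; under [RHS]eq_bigr do rewrite const_corr.
  by rewrite sumr_const cardfE mulr_natr -!mulrnA mulnC.
have A_gt1 : (1 < #|` A|)%N by rewrite cardfE; apply/card_gt1P; exists k, l.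
rewrite -mulNr -corr_mul mulfK // pnatr_eq0 muln_eq0 negb_or -!lt0n.
by rewrite ltn_predRL A_gt1 (ltnW A_gt1).
Qed.

Lemma sum_Omega_quadratic (a : A -> A -> R) :
  \sum_(p in Om) \sum_k \sum_l eps p k * eps p l * a k l =
  \sum_(p in Om) \sum_k eps p k ^+ 2 * a k k
  - (#|Om| * L)%:R / (#|` A| * #|` A|.-1)%:R * \sum_k \sum_(l | l != k) a k l.
Proof.
have offdiag : \sum_(p in Om) \sum_k \sum_(l | l != k) eps p k * eps p l * a k l =
                \sum_k \sum_(l | l != k) sign_corr k l * a k l.
  rewrite exchange_big; apply: eq_bigr => k _ /=; rewrite exchange_big.
  by apply: eq_bigr => l _; rewrite /sign_corr mulr_suml.
transitivity (\sum_(p in Om) \sum_k eps p k ^+ 2 * a k k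
              + \sum_k \sum_(l | l != k) sign_corr k l * a k l).
  rewrite -offdiag -big_split; apply: eq_bigr => p _ /=.
  by rewrite -big_split; apply: eq_bigr => k _ /=; rewrite (bigD1 k) //= expr2.
congr (_ + _); rewrite -mulNr mulr_sumr; apply: eq_bigr => k _.
by rewrite mulr_sumr; apply: eq_bigr => l neq_lk; rewrite sign_corr_offdiag // eq_sym.
Qed.

End Signs.

Lemma card_ord_lt n L : (L <= n)%N -> #|[set i : 'I_n | (i < L)%N]%SET| = L.
Proof.
move=> le_Ln; rewrite -sum1_card (eq_bigl (fun i : 'I_n => (i < L)%N)); last first.
  by move=> i; rewrite inE.
by rewrite -(big_ord_widen n (fun _ => 1%N) le_Ln) sum1_card card_ord.
Qed.

Lemma card_Omega_gt0 (A : {fset nat}) L :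
  ~~ odd L -> (L <= #|` A|)%N -> (0 < #|Omega A L|)%N.
Proof.
rewrite cardfE => even_L le_LA; pose M := L./2.
(* The first L elements of A in enumeration order, the first L/2 of them signed +1. *)
have L_double : L = (M + M)%N by rewrite addnn -[LHS](odd_double_half L) (negbTE even_L).
pose B := [set k : A | (enum_rank k < L)%N]%SET.
pose g := [ffun k : A => if (enum_rank k < L)%N then Some (enum_rank k < M)%N else None].
apply/card_gt0P; exists (B, g); apply/OmegaP; split=> /=.
- have -> : B = enum_rank @^-1: [set i : 'I_#|{: A}| | (i < L)%N]%SET.
    by apply/setP => k; rewrite !inE.
  by rewrite on_card_preimset ?card_ord_lt //; exact: onW_bij (enum_rank_bij _).
- by move=> k; rewrite !inE ffunE; case: ifP.
- rewrite (reindex _ (onW_bij _ (enum_val_bij _))) /=.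
  under eq_big => [i|i _] do [rewrite inE enum_valK | rewrite ffunE enum_valK].
  pose sgn_ord i := sgn (if (i < L)%N then Some (i < M)%N else None).
  rewrite -(big_ord_widen _ sgn_ord le_LA) /sgn_ord.
  rewrite L_double big_split_ord /=.
  under eq_bigr => i _ do rewrite ltn_addr // (ltn_ord i).
  under [X in _ + X]eq_bigr => i _ do rewrite /= ltn_add2l ltn_ord ltnNge leq_addr.
  by rewrite !sumr_const card_ord /= mulNrn subrr.
Qed.

Lemma bvecE (R : realType) (V : normedModType R) (A : {fset nat}) L (v : nat -> V) p :
  p \in Omega A L -> bvec v p = \sum_k eps R p k *: v (fsval k).
Proof.
move=> pO; rewrite /bvec [RHS](bigID (mem p.1)) /= [X in _ + X]big1 ?addr0 // => k kNp.
by rewrite (eps_out _ pO kNp) scale0r.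
Qed.

Lemma maxdel_ge (R : realType) (V : normedModType R) (v : nat -> V) (A : {fset nat})
    (k : A) :
  `|\sum_(l : A | l != k) v (fsval l)| <= maxdel v A.
Proof.
have := @le_bigmax_seq _ R _ (enum_fset A) 0 (fsval k) predT
  (fun l => `|\sum_(j <- A | j != l) v j|) (fsvalP k) isT.
by rewrite big_seq_fsetE /=; under eq_bigl do rewrite (inj_eq val_inj).
Qed.

Section Bilinear.
Variables (R : realType) (X Y : normedModType R) (pair : X -> Y -> R).
Hypothesis pair_linl :
  forall (a : R) (x x' : X) (y : Y), pair (a *: x + x') y = a * pair x y + pair x' y.
Hypothesis pair_linr :
  forall (a : R) (x : X) (y y' : Y), pair x (a *: y + y') = a * pair x y + pair x y'.

Lemma pairDl x x' y : pair (x + x') y = pair x y + pair x' y.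
Proof. by have := pair_linl 1 x x' y; rewrite scale1r mul1r. Qed.

Lemma pairDr x y y' : pair x (y + y') = pair x y + pair x y'.
Proof. by have := pair_linr 1 x y y'; rewrite scale1r mul1r. Qed.

Lemma pair0l y : pair 0 y = 0.
Proof. by apply: (addrI (pair 0 y)); rewrite -pairDl !addr0. Qed.

Lemma pair0r x : pair x 0 = 0.
Proof. by apply: (addrI (pair x 0)); rewrite -pairDr !addr0. Qed.

Lemma pairZl a x y : pair (a *: x) y = a * pair x y.
Proof. by have := pair_linl a x 0 y; rewrite addr0 pair0l addr0. Qed.

Lemma pairZr a x y : pair x (a *: y) = a * pair x y.
Proof. by have := pair_linr a x y 0; rewrite addr0 pair0r addr0. Qed.

Lemma pair_suml (I : Type) (r : seq I) (P : pred I) (F : I -> X) y :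
  pair (\sum_(i <- r | P i) F i) y = \sum_(i <- r | P i) pair (F i) y.
Proof. exact: (big_morph (pair^~ y) (fun x x' => pairDl x x' y) (pair0l y)). Qed.

Lemma pair_sumr (I : Type) (r : seq I) (P : pred I) (F : I -> Y) x :
  pair x (\sum_(i <- r | P i) F i) = \sum_(i <- r | P i) pair x (F i).
Proof. exact: (big_morph (pair x) (pairDr x) (pair0r x)). Qed.

End Bilinear.

Section OperatorNorm.
Variables (R : realType) (X : normedModType R) (T : {linear X -> X}).
Hypothesis T_bounded : exists M : R, forall x, `|T x| <= M * `|x|.

Lemma opnorm_has_ubound : has_ubound [set `|T x| | x in [set x : X | `|x| <= 1]].
Proof.
case: T_bounded => M TM; exists `|M| => _ [x /= x_le1 <-].
apply: (le_trans (TM x)); apply: (le_trans (ler_norm _)).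
by rewrite normrM normr_id ler_piMr.
Qed.

Lemma opnorm_ge0 : 0 <= opnorm T.
Proof.
apply: le_trans (normr_ge0 (T 0)) (ub_le_sup opnorm_has_ubound _).
by exists 0; rewrite /= ?normr0.
Qed.

Lemma norm_le_opnorm x : `|T x| <= opnorm T * `|x|.
Proof.
have [->|x_neq0] := eqVneq x 0; first by rewrite linear0 !normr0 mulr0.
have x_gt0 : 0 < `|x| by rewrite normr_gt0.
have unit_le : `|T (`|x|^-1 *: x)| <= opnorm T.
  apply: ub_le_sup; first exact: opnorm_has_ubound.
  by exists (`|x|^-1 *: x) => //=; rewrite normrZ ger0_norm ?invr_ge0 // mulVf // gt_eqF.
rewrite linearZ normrZ ger0_norm ?invr_ge0 // in unit_le.
by rewrite -ler_pdivrMr // mulrC.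
Qed.

End OperatorNorm.

Section OffdiagonalBound.
Variables (R : realType) (U V : normedModType R) (b : U -> V -> R) (C : R).
Hypotheses (bDr : forall x y y', b x (y + y') = b x y + b x y') (C_ge0 : 0 <= C)
  (b_bound : forall x y, `|b x y| <= C * `|x| * `|y|).

Lemma norm_sum_offdiag_le (A : {fset nat}) (u : nat -> U) (v : nat -> V) :
  (forall j, `|u j| = 1) ->
  `|\sum_(k : A) \sum_(l | l != k) b (u (fsval k)) (v (fsval l))|
    <= #|` A|%:R * (C * maxdel v A).
Proof.
move=> u_unit.
have b0r x : b x 0 = 0 by apply: (addrI (b x 0)); rewrite -bDr !addr0.
apply: le_trans (ler_norm_sum _ _ _) _; rewrite cardfE mulr_natl -sumr_const.
apply: ler_sum => k _.
rewrite -(big_morph (b (u (fsval k))) (bDr _) (b0r _)); apply: le_trans (b_bound _ _) _.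
by rewrite u_unit mulr1 ler_wpM2l // maxdel_ge.
Qed.

End OffdiagonalBound.

Section MeanPairing.
Variables (R : realType) (X Y : normedModType R) (pair : X -> Y -> R).
Variables (T : {linear X -> X}) (e : nat -> X) (f : nat -> Y) (K delta : R).
Variables (A : {fset nat}) (L : nat).
Hypothesis pair_linl :
  forall (a : R) (x x' : X) (y : Y), pair (a *: x + x') y = a * pair x y + pair x' y.
Hypothesis pair_linr :
  forall (a : R) (x : X) (y y' : Y), pair x (a *: y + y') = a * pair x y + pair x y'.
Hypotheses (e_unit : forall j, `|e j| = 1) (f_unit : forall j, `|f j| = 1).
Hypotheses (K_ge0 : 0 <= K) (pairT_bound : forall x y, `|pair (T x) y| <= K * `|x| * `|y|).
Hypothesis delta_le : forall j, delta <= pair (T (e j)) (f j).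

Local Notation Om := (Omega A L).
Local Notation a k l := (pair (T (e (fsval (k : A)))) (f (fsval (l : A)))).

Lemma pair_bvec p : p \in Om ->
  pair (T (bvec e p)) (bvec f p) = \sum_k \sum_l eps R p k * eps R p l * a k l.
Proof.
move=> pO; rewrite !(bvecE _ pO) linear_sum pair_suml //; apply: eq_bigr => k _.
rewrite linearZ pairZl // pair_sumr // mulr_sumr; apply: eq_bigr => l _.
by rewrite pairZr // mulrA.
Qed.

Lemma sum_Omega_diag_ge :
  (#|Om| * L)%:R * delta <= \sum_(p in Om) \sum_k eps R p k ^+ 2 * a k k.
Proof.
rewrite natrM -mulrA mulr_natl -sumr_const; apply: ler_sum => p pO.
rewrite -(sum_eps_sqr R pO) mulr_suml; apply: ler_sum => k _.
by rewrite ler_wpM2l ?sqr_ge0.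
Qed.

Lemma norm_sum_offdiag_pair_le :
  `|\sum_k \sum_(l | l != k) a k l|
    <= #|` A|%:R * (K * Num.min (maxdel e A) (maxdel f A)).
Proof.
have pairTDr x y y' : pair (T x) (y + y') = pair (T x) y + pair (T x) y'.
  exact: pairDr.
have pairTDl y x x' : pair (T (x + x')) y = pair (T x) y + pair (T x') y.
  by rewrite linearD pairDl.
have pairT_bound' y x : `|pair (T x) y| <= K * `|y| * `|x| by rewrite mulrAC.
have bound_f := norm_sum_offdiag_le (b := fun x y => pair (T x) y)
  pairTDr K_ge0 pairT_bound A f e_unit.
have bound_e := norm_sum_offdiag_le (b := fun y x => pair (T x) y)
  pairTDl K_ge0 pairT_bound' A e f_unit.
have swap : \sum_k \sum_(l | l != k) a k l = \sum_l \sum_(k | k != l) a k l.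
  rewrite (exchange_big_dep predT) //=; apply: eq_bigr => l _.
  by apply: eq_bigl => k; rewrite eq_sym.
by case: (leP (maxdel e A) (maxdel f A)) => _; first rewrite swap.
Qed.

Lemma mean_pair_Omega_ge : (0 < L)%N -> ~~ odd L -> (L <= #|` A|)%N ->
  (delta - K / (#|` A| - 1)%:R * Num.min (maxdel e A) (maxdel f A)) * L%:R <=
  (\sum_(p in Om) pair (T (bvec e p)) (bvec f p)) / #|Om|%:R.
Proof.
move=> L_gt0 even_L le_LA.
have L_gt1 : (1 < L)%N by move: L_gt0 even_L; case: (L) => [|[]].
have A_gt1 : (1 < #|` A|)%N := leq_trans L_gt1 le_LA.
have Om_gt0 : (0 < #|Om|)%N := card_Omega_gt0 even_L le_LA.
rewrite (eq_bigr _ pair_bvec) sum_Omega_quadratic subn1.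
set N := #|` A|; set m := Num.min _ _; set Q := \sum_k \sum_(l | l != k) _.
set c := (#|Om| * L)%:R / (N * N.-1)%:R.
have cQ_le : c * Q <= c * (N%:R * (K * m)).
  by rewrite ler_wpM2l ?divr_ge0 // (le_trans (ler_norm Q)) ?norm_sum_offdiag_pair_le.
rewrite ler_pdivlMr ?ltr0n //; apply: le_trans (lerB sum_Omega_diag_ge cQ_le).
have N_neq0 : N%:R != 0 :> R by rewrite pnatr_eq0 -lt0n (ltn_trans _ A_gt1).
have N1_neq0 : N.-1%:R != 0 :> R by rewrite pnatr_eq0 -lt0n ltn_predRL.
rewrite le_eqVlt; apply/orP; left; apply/eqP; rewrite /c !natrM; field.
by rewrite N_neq0 N1_neq0.
Qed.

End MeanPairing.

Lemma delta_of_le (R : realType) (X Y : normedModType R) (pair : X -> Y -> R)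
    (T : X -> X) (e : nat -> X) (f : nat -> Y) (K : R) :
  (forall x y, `|pair (T x) y| <= K * `|x| * `|y|) ->
  (forall j, `|e j| = 1) -> (forall j, `|f j| = 1) ->
  forall j, delta_of pair T e f <= pair (T (e j)) (f j).
Proof.
move=> pairT_bound e_unit f_unit j; apply: ge_inf; last by exists j.
exists (- K) => _ [i _ <-]; rewrite lerNl.
have := pairT_bound (e i) (f i); rewrite e_unit f_unit !mulr1; apply: le_trans.
by rewrite -normrN ler_norm.
Qed.

Lemma maxdel_min_le_nu (R : realType) (X Y : normedModType R)
    (e : nat -> X) (f : nat -> Y) (A : {fset nat}) :
  ((Num.min (maxdel e A) (maxdel f A))%:E <= nu e f #|` A|)%E.
Proof. by apply: ereal_sup_ubound; exists A. Qed.

Theorem lemma3p2 (R : realType) (X Y : completeNormedModType R)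
  (pair : X -> Y -> R) (e : nat -> X) (f : nat -> Y) (C_d : R)
  (T : {linear X -> X}) (L N : nat) (A : {fset nat}) :
  (* bilinearity of <.,.> *)
  (forall (a : R) (x x' : X) (y : Y), pair (a *: x + x') y = a * pair x y + pair x' y) ->
  (forall (a : R) (x : X) (y y' : Y), pair x (a *: y + y') = a * pair x y + pair x y') ->
  (* normalized sequences *)
  (forall j, `|e j| = 1) -> (forall j, `|f j| = 1) ->
  (* (B1) *)
  (forall x : X, (forall y : Y, pair x y = 0) -> x = 0) ->
  (* (B2) *)
  (forall y : Y, (forall x : X, pair x y = 0) -> y = 0) ->
  (* (B3) *)
  0 < C_d -> (forall x y, `|pair x y| <= C_d * `|x| * `|y|) ->
  (* (B4) *)
  (forall j k, pair (e j) (f k) = if j == k then 1 else 0) ->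
  (* (B5) existence: x = sum_j <x,f_j> e_j in sigma(X,Y) *)
  (forall (x : X) (y : Y),
     (fun n => pair (\sum_(j < n) pair x (f j) *: e j) y) @ \oo --> pair x y) ->
  (* (B5) uniqueness *)
  (forall (x : X) (a : nat -> R),
     (forall y : Y, (fun n => pair (\sum_(j < n) a j *: e j) y) @ \oo --> pair x y) ->
     forall j, a j = pair x (f j)) ->
  (* T bounded *)
  (exists M : R, forall x, `|T x| <= M * `|x|) ->
  0 < delta_of pair T e f ->
  (* L in 2N, N >= L, |A| = N *)
  (0 < L)%N -> ~~ odd L -> (L <= N)%N -> (#|` A|)%fset = N ->
  ((((\sum_(p in Omega A L) pair (T (bvec e p)) (bvec f p))
       / #|Omega A L|%:R)%:E) >=
   ((delta_of pair T e f)%:E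
      - (C_d * opnorm T / (N - 1)%:R)%:E * nu e f N) * L%:R%:E)%E.
Proof.
move=> pair_linl pair_linr e_unit f_unit _ _ C_gt0 pair_bound _ _ _ T_bounded _.
move=> L_gt0 even_L le_LN cardA.
have le_LA : (L <= #|` A|)%N by rewrite cardA.
have K_ge0 : 0 <= C_d * opnorm T := mulr_ge0 (ltW C_gt0) (opnorm_ge0 T_bounded).
have pairT_bound x y : `|pair (T x) y| <= C_d * opnorm T * `|x| * `|y|.
  apply: le_trans (pair_bound _ _) _; rewrite -!mulrA; apply: ler_wpM2l; first exact: ltW.
  by rewrite mulrA; apply: ler_wpM2r => //; exact: norm_le_opnorm.
have := mean_pair_Omega_ge pair_linl pair_linr e_unit f_unit K_ge0 pairT_bound
  (delta_of_le pairT_bound e_unit f_unit) L_gt0 even_L le_LA.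
rewrite cardA -lee_fin => /(le_trans _); apply.
rewrite (EFinM (_ - _)) EFinB (EFinM _ (Num.min _ _)).
apply: lee_wpmul2r; first by rewrite lee_fin.
apply: leeB => //; apply: lee_wpmul2l; first by rewrite lee_fin divr_ge0.
by rewrite -cardA maxdel_min_le_nu.
Qed.
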